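(* Let $n \geq 12$ and let $\Gamma_n$ be the group with presentation $$\Gamma_n = \langle s, x \mid [s^n, x] = 1,\ [x, s^i x s^{-i}] = 1 \text{ for } 1 \leq i \leq n-1 \rangle.$$ Let $S_1 = \{s, x\}$, $S_2 = \{s^{-1}, x\}$, $S_3 = \{s, x^{-1}\}$, $S_4 = \{s^{-1}, x^{-1}\}$. Then there exist elements $f_1, f_2, f_3, f_4, g_1, g_2, g_3, g_4 \in \Gamma_n$ such that: (i) $\langle f_1, f_2, f_3, f_4 \rangle \cong \langle g_1, g_2, g_3, g_4 \rangle \cong \mathbb{Z}^4$; (ii) each of $f_1, f_2, f_3, f_4$ can be represented by a positive word in the alphabet $S_1$; (iii) for every $1 \leq i \leq 4$, the element $g_i$ can be represented by a positive word in the alphabet $S_i$.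
   Context: $[a,b]$ denotes the commutator of $a$ and $b$. Let $G$ be a group and $S \subseteq G \setminus \{1\}$ a subset such that $x \in S$ implies $x^{-1} \notin S$. A non-trivial reduced word $W = y_1^{m_1} \cdots y_k^{m_k}$ is a positive word in the alphabet $S$ if $y_1, \dots, y_k \in S$ and all exponents $m_1, \dots, m_k$ are positive integers. An element is represented by such a word if it equals the product in $G$. *)

(* The group Gamma_n is built honestly from its presentation:
   elements are words in s^{+-1}, x^{+-1}, modulo the congruence generated by
   free cancellation and the defining relators. *)
From mathcomp Require Import all_boot all_algebra.
Set Implicit Arguments. Unset Strict Implicit. Unset Printing Implicit Defensive.
Import GRing.Theory.

(* A letter (gen, inv): gen = false is s, gen = true is x; inv = true means inverse. *)
Definition letter := (bool * bool)%type.
Definition word := seq letter.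

Definition ls  : letter := (false, false).
Definition lsi : letter := (false, true).
Definition lx  : letter := (true, false).
Definition lxi : letter := (true, true).

Definition linv (l : letter) : letter := (l.1, ~~ l.2).
Definition winv (w : word) : word := rev (map linv w).
Definition wpow (w : word) (k : nat) : word := flatten (nseq k w).

Definition wcomm (a b : word) : word := winv a ++ winv b ++ a ++ b.

Definition relators (n : nat) : seq word :=
  wcomm (wpow [:: ls] n) [:: lx]
  :: [seq wcomm [:: lx] (wpow [:: ls] i ++ [:: lx] ++ wpow [:: lsi] i) | i <- iota 1 n.-1].

Inductive gamma_eq (n : nat) : word -> word -> Prop :=
  | ge_refl w : gamma_eq n w w
  | ge_sym u v : gamma_eq n u v -> gamma_eq n v u
  | ge_trans u v w : gamma_eq n u v -> gamma_eq n v w -> gamma_eq n u w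
  | ge_free u v l : gamma_eq n (u ++ [:: l; linv l] ++ v) (u ++ v)
  | ge_rel u v r : r \in relators n -> gamma_eq n (u ++ r ++ v) (u ++ v).

Inductive gen_word (fs : seq word) : word -> Prop :=
  | gw_nil : gen_word fs [::]
  | gw_pos f w : f \in fs -> gen_word fs w -> gen_word fs (f ++ w)
  | gw_neg f w : f \in fs -> gen_word fs w -> gen_word fs (winv f ++ w).

Definition in_subgroup (n : nat) (fs : seq word) (g : word) : Prop :=
  exists w, gen_word fs w /\ gamma_eq n g w.

Definition Z4 := {ffun 'I_4 -> int}.

Definition subgroup_iso_Z4 (n : nat) (fs : seq word) : Prop :=
  exists phi : Z4 -> word,
    (forall a b : Z4, gamma_eq n (phi (a + b)%R) (phi a ++ phi b)) /\
    (forall a b : Z4, gamma_eq n (phi a) (phi b) -> a = b) /\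
    (forall g, in_subgroup n fs g <-> exists a, gamma_eq n g (phi a)).

(* g is represented by a positive word y_1^{m_1} ... y_k^{m_k} in the alphabet S:
   k >= 1, y_i in S, m_i > 0, reduced (consecutive y_i distinct) *)
Definition positive_rep (n : nat) (S : seq letter) (g : word) : Prop :=
  exists W : seq (letter * nat),
    W != [::] /\
    all (fun p => (p.1 \in S) && (0 < p.2)%N) W /\
    sorted (fun p q => p.1 != q.1) W /\
    gamma_eq n (flatten [seq wpow [:: p.1] p.2 | p <- W]) g.

Definition S1 : seq letter := [:: ls; lx].
Definition S2 : seq letter := [:: lsi; lx].
Definition S3 : seq letter := [:: ls; lxi].
Definition S4 : seq letter := [:: lsi; lxi].

From mathcomp Require Import all_boot all_algebra zify.
Import GRing.Theory.
Set Implicit Arguments. Unset Strict Implicit.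

(* Let x_i = s^i x s^-i.  The words x_0, x_1, x_2 and s^n pairwise commute in
   Gamma_n: x_0 commutes with x_i (0 < i < n) by a relator, hence x_i with x_j
   after conjugating by a power of s; and s^n commutes with x by the relator
   [s^n, x], hence with every x_i.  So a |-> x_0^a0 x_1^a1 x_2^a2 s^(n a3) is a
   homomorphism Z^4 -> Gamma_n.  It is injective because the exponent sum of s
   and, for each residue j mod n, the exponent sum of the letters x^{+-1} at
   s-height j mod n are invariant under free cancellation and the relators, and
   they read off a.  Finally the positive words x, s^i x s^(n-i) = x_i s^n, s^n,
   s^2 x^-1 s^(n-2) = x_2^-1 s^n and x^-1 s^-n generate the same subgroups as
   x_0, x_1, x_2, s^n. *)

Lemma linvK : involutive linv.
Proof. by case=> a b; rewrite /linv negbK. Qed.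

Lemma winvK : involutive winv.
Proof. by move=> w; rewrite /winv map_rev revK -map_comp (eq_map linvK) map_id. Qed.

Lemma winv_cat u v : winv (u ++ v) = winv v ++ winv u.
Proof. by rewrite /winv map_cat rev_cat. Qed.

Lemma winv_cons l w : winv (l :: w) = winv w ++ [:: linv l].
Proof. by rewrite /winv /= rev_cons -cats1. Qed.

Lemma winv_nseq k l : winv (nseq k l) = nseq k (linv l).
Proof. by rewrite /winv map_nseq rev_nseq. Qed.

Lemma wpow1l k l : wpow [:: l] k = nseq k l.
Proof. by rewrite /wpow; elim: k => //= k ->. Qed.

Lemma wpowS w k : wpow w k.+1 = w ++ wpow w k.
Proof. by []. Qed.

Lemma wpowSr w k : wpow w k.+1 = wpow w k ++ w.
Proof.
rewrite /wpow; elim: k => [|k IHk]; first by rewrite /= cats0.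
by rewrite /= in IHk *; rewrite -catA -IHk.
Qed.

Section GammaEq.
Variable n : nat.

Lemma ge_cong p q u v : gamma_eq n u v -> gamma_eq n (p ++ u ++ q) (p ++ v ++ q).
Proof.
elim=> {u v} [w | u v _ | u v w _ IHuv _ IHvw | u v l | u v r r_rel].
- exact: ge_refl.
- exact: ge_sym.
- exact: ge_trans IHvw.
- by have := ge_free n (p ++ u) (v ++ q) l; rewrite !catA.
- by have := ge_rel (p ++ u) (v ++ q) r_rel; rewrite !catA.
Qed.

Lemma ge_catl p u v : gamma_eq n u v -> gamma_eq n (p ++ u) (p ++ v).
Proof. by move/(ge_cong p [::]); rewrite !cats0. Qed.

Lemma ge_catr q u v : gamma_eq n u v -> gamma_eq n (u ++ q) (v ++ q).
Proof. exact: ge_cong [::] q u v. Qed.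

Lemma ge_cat u u' v v' :
  gamma_eq n u u' -> gamma_eq n v v' -> gamma_eq n (u ++ v) (u' ++ v').
Proof. by move=> Eu Ev; apply: ge_trans (ge_catr _ Eu) (ge_catl _ Ev). Qed.

Lemma ge_relator r : r \in relators n -> gamma_eq n r [::].
Proof. by move=> r_rel; have := ge_rel [::] [::] r_rel; rewrite cats0. Qed.

Lemma ge_mulgV w : gamma_eq n (w ++ winv w) [::].
Proof.
elim: w => [|l w IHw] /=; first exact: ge_refl.
rewrite winv_cons -cat1s (catA w).
apply: ge_trans (ge_cong [:: l] [:: linv l] IHw) _.
exact: ge_free n [::] [::] l.
Qed.

Lemma ge_mulVg w : gamma_eq n (winv w ++ w) [::].
Proof. by have := ge_mulgV (winv w); rewrite winvK. Qed.

Lemma ge_mulKg p u : gamma_eq n (winv p ++ p ++ u) u.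
Proof. by rewrite catA; have := ge_catr u (ge_mulVg p). Qed.

Lemma ge_mulKVg p u : gamma_eq n (p ++ winv p ++ u) u.
Proof. by have := ge_mulKg (winv p) u; rewrite winvK. Qed.

Lemma ge_mulgK p u : gamma_eq n ((u ++ p) ++ winv p) u.
Proof. by rewrite -catA; have := ge_catl u (ge_mulgV p); rewrite cats0. Qed.

Lemma ge_mulgKV p u : gamma_eq n ((u ++ winv p) ++ p) u.
Proof. by have := ge_mulgK (winv p) u; rewrite winvK. Qed.

Lemma ge_winv u v : gamma_eq n u v -> gamma_eq n (winv u) (winv v).
Proof.
move=> Euv; apply: ge_trans (ge_sym (ge_mulgK v (winv u))) _.
apply: ge_trans (ge_catr _ (ge_catl _ (ge_sym Euv))) _.
by rewrite -catA; apply: ge_mulKg.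
Qed.

End GammaEq.

Definition zpow (w : word) (z : int) : word :=
  match z with Posz k => wpow w k | Negz k => wpow (winv w) k.+1 end.

Definition wcommute n (a b : word) : Prop := gamma_eq n (a ++ b) (b ++ a).

Section ZPow.
Variable n : nat.
Implicit Types (w : word) (z : int).
Local Open Scope ring_scope.

Lemma zpowD1 w z : gamma_eq n (zpow w (z + 1)) (zpow w z ++ w).
Proof.
case: z => [k | [|k]].
- by rewrite -PoszD addn1 /= wpowSr; apply: ge_refl.
- by rewrite /= /wpow /= cats0; apply: ge_sym; apply: ge_mulVg.
- have -> : Negz k.+1 + 1 = Negz k by rewrite !NegzE; lia.
  by rewrite /= [wpow _ k.+2]wpowSr; apply: ge_sym; apply: ge_mulgKV.
Qed.

Lemma zpowB1 w z : gamma_eq n (zpow w (z - 1)) (zpow w z ++ winv w).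
Proof.
have := ge_catr (winv w) (zpowD1 w (z - 1)); rewrite subrK => E.
exact: ge_trans (ge_sym (ge_mulgK _ _ _)) (ge_sym E).
Qed.

Lemma zpowD w z1 z2 : gamma_eq n (zpow w (z1 + z2)) (zpow w z1 ++ zpow w z2).
Proof.
elim/int_rec: z2 => [|k IHk|k IHk].
- by rewrite addr0 cats0; apply: ge_refl.
- rewrite -[k.+1]addn1 PoszD addrA.
  apply: ge_trans (zpowD1 _ _) _; apply: ge_trans (ge_catr _ IHk) _.
  by rewrite -catA; apply: ge_catl; apply: ge_sym; apply: zpowD1.
- rewrite intS (addrC 1) opprD addrA.
  apply: ge_trans (zpowB1 _ _) _; apply: ge_trans (ge_catr _ IHk) _.
  by rewrite -catA; apply: ge_catl; apply: ge_sym; apply: zpowB1.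
Qed.

End ZPow.

Section Commute.
Variable n : nat.
Implicit Types a b c : word.

Lemma wcommute_of_wcomm a b : gamma_eq n (wcomm a b) [::] -> wcommute n a b.
Proof.
rewrite /wcomm catA -winv_cat => /(ge_catl (b ++ a)); rewrite cats0.
exact: ge_trans (ge_sym (ge_mulKVg _ _ _)).
Qed.

Lemma wcommuteC a b : wcommute n a b -> wcommute n b a.
Proof. exact: ge_sym. Qed.

Lemma wcommute0r a : wcommute n a [::].
Proof. by rewrite /wcommute cats0; apply: ge_refl. Qed.

Lemma wcommute_catr a b c : wcommute n a b -> wcommute n a c -> wcommute n a (b ++ c).
Proof.
move=> Cab Cac; apply: (@ge_trans _ _ (b ++ a ++ c)).
  by rewrite !catA; apply: ge_catr.
by rewrite -catA; apply: ge_catl.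
Qed.

Lemma wcommute_winvr a b : wcommute n a b -> wcommute n a (winv b).
Proof.
move=> Cab; apply: (@ge_trans _ _ (winv b ++ (b ++ a) ++ winv b)).
  by rewrite -catA; apply: ge_sym; apply: ge_mulKg.
by apply: ge_catl; apply: ge_trans (ge_catr _ (ge_sym Cab)) _; apply: ge_mulgK.
Qed.

Lemma wcommute_zpowr a b z : wcommute n a b -> wcommute n a (zpow b z).
Proof.
have wcommute_wpowr c k : wcommute n a c -> wcommute n a (wpow c k).
  by move=> Cac; elim: k => [|k IHk]; [apply: wcommute0r | apply: wcommute_catr].
by move=> Cab; case: z => k; apply: wcommute_wpowr => //; apply: wcommute_winvr.
Qed.

Lemma wcommute_conj a b c :
  wcommute n a b -> wcommute n (c ++ a ++ winv c) (c ++ b ++ winv c).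
Proof.
have conj_cat u v :
    gamma_eq n ((c ++ u ++ winv c) ++ c ++ v ++ winv c) (c ++ (u ++ v) ++ winv c).
  by rewrite -!catA; do 2 apply: ge_catl; apply: ge_mulKg.
move=> Cab; apply: ge_trans (conj_cat a b) _; apply: ge_trans (ge_sym (conj_cat b a)).
exact: ge_cong.
Qed.

End Commute.

Section Invariants.
Variable n : nat.
Implicit Types (a b u v w : word) (j o : int).
Local Open Scope ring_scope.

Definition lsign (l : letter) : int := if l.2 then -1 else 1.

Fixpoint s_exp w : int :=
  if w is l :: w' then (if l.1 then 0 else lsign l) + s_exp w' else 0.

(* [x_exp j o w] is the exponent sum of those letters [x^{+-1}] of [w] whose
   height, [o] plus the [s]-exponent of the prefix before them, is [j] mod [n]. *)
Fixpoint x_exp j o w : int :=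
  if w is l :: w' then
    if l.1 then (if (o %% n)%Z == (j %% n)%Z then lsign l else 0) + x_exp j o w'
    else x_exp j (o + lsign l) w'
  else 0.

Lemma s_exp_cat u v : s_exp (u ++ v) = s_exp u + s_exp v.
Proof. by elim: u => [|l u IHu] /=; rewrite ?add0r // IHu addrA. Qed.

Lemma x_exp_cat j o u v : x_exp j o (u ++ v) = x_exp j o u + x_exp j (o + s_exp u) v.
Proof.
elim: u o => [|l u IHu] o /=; first by rewrite add0r addr0.
by case: l.1; rewrite IHu ?add0r addrA.
Qed.

Lemma s_exp_winv w : s_exp (winv w) = - s_exp w.
Proof.
elim: w => [|l w IHw] //=; rewrite winv_cons s_exp_cat IHw.
by case: l => [[] []]; rewrite /linv /= /lsign /=; lia.
Qed.

Lemma x_exp_winv j o w : x_exp j o (winv w) = - x_exp j (o - s_exp w) w.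
Proof.
elim: w o => [|l w IHw] o //=; rewrite winv_cons x_exp_cat IHw s_exp_winv.
case: l => [[] []]; rewrite /linv /= /lsign /= ?add0r ?addr0.
- by case: ifP => _; lia.
- by case: ifP => _; lia.
- by have -> : o - (-1 + s_exp w) - 1 = o - s_exp w by lia.
- by have -> : o - (1 + s_exp w) + 1 = o - s_exp w by lia.
Qed.

Lemma x_exp_periodic j o d w : (n %| d)%Z -> x_exp j (o + d) w = x_exp j o w.
Proof.
move=> n_d; elim: w o => [|l w IHw] o //=.
case: l.1; last by rewrite addrAC IHw.
have -> : ((o + d) %% n = o %% n)%Z by rewrite -(divzK n_d) addrC modzMDl.
by rewrite IHw.
Qed.

Lemma s_exp_nseq_ls k : s_exp (nseq k ls) = k%:Z.
Proof. by elim: k => //= k ->; rewrite /lsign /=; lia. Qed.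

Lemma s_exp_nseq_lsi k : s_exp (nseq k lsi) = - k%:Z.
Proof. by elim: k => //= k ->; rewrite /lsign /=; lia. Qed.

Lemma x_exp_nseq j o k l : ~~ l.1 -> x_exp j o (nseq k l) = 0.
Proof. by move/negbTE=> sl; elim: k o => [|k IHk] o //=; rewrite sl IHk. Qed.

Lemma s_exp_wcomm a b : s_exp (wcomm a b) = 0.
Proof. by rewrite /wcomm !s_exp_cat !s_exp_winv; lia. Qed.

Lemma x_exp_wcomm j o a b : x_exp j o (wcomm a b) =
  - x_exp j (o - s_exp a) a - x_exp j (o - s_exp a - s_exp b) b
  + x_exp j (o - s_exp a - s_exp b) a + x_exp j (o - s_exp b) b.
Proof.
rewrite /wcomm !x_exp_cat !x_exp_winv !s_exp_winv !addrA.
by have -> : o - s_exp a - s_exp b + s_exp a = o - s_exp b by lia.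
Qed.

Lemma s_exp_relator r : r \in relators n -> s_exp r = 0.
Proof. by rewrite inE => /predU1P [-> | /mapP [i _ ->]]; apply: s_exp_wcomm. Qed.

Lemma x_exp_relator j o r : r \in relators n -> x_exp j o r = 0.
Proof.
rewrite inE => /predU1P [-> | /mapP [i _ ->]]; rewrite x_exp_wcomm !wpow1l.
  rewrite s_exp_nseq_ls !x_exp_nseq //= /lsign /= !addr0 oppr0 add0r.
  have -> : ((o - n%:Z) %% n = o %% n)%Z by rewrite -[in RHS](subrK n%:Z o) modzDr.
  exact: addNr.
have -> : s_exp (nseq i ls ++ [:: lx] ++ nseq i lsi) = 0.
  by rewrite !s_exp_cat s_exp_nseq_ls s_exp_nseq_lsi /=; lia.
have -> : s_exp [:: lx] = 0 by [].
by rewrite !subr0; lia.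
Qed.

Lemma s_exp_pair l : s_exp [:: l; linv l] = 0.
Proof. by case: l => [[] []]. Qed.

Lemma x_exp_pair j o l : x_exp j o [:: l; linv l] = 0.
Proof. by case: l => [[] []] //=; rewrite addr0; case: ifP. Qed.

Lemma s_exp_insert u r v : s_exp r = 0 -> s_exp (u ++ r ++ v) = s_exp (u ++ v).
Proof. by move=> r0; rewrite !s_exp_cat r0 add0r. Qed.

Lemma x_exp_insert j o u r v : s_exp r = 0 -> (forall o, x_exp j o r = 0) ->
  x_exp j o (u ++ r ++ v) = x_exp j o (u ++ v).
Proof. by move=> sr0 xr0; rewrite !x_exp_cat xr0 sr0 add0r addr0. Qed.

Lemma ge_s_exp u v : gamma_eq n u v -> s_exp u = s_exp v.
Proof.
elim=> {u v} [//|u v _ -> //|u v w _ -> _ -> //|u v l|u v r r_rel].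
- exact/s_exp_insert/s_exp_pair.
- exact/s_exp_insert/s_exp_relator.
Qed.

Lemma ge_x_exp j o u v : gamma_eq n u v -> x_exp j o u = x_exp j o v.
Proof.
elim=> {u v} [//|u v _ -> //|u v w _ -> _ -> //|u v l|u v r r_rel].
- by apply: x_exp_insert => [|o']; [apply: s_exp_pair | apply: x_exp_pair].
- by apply: x_exp_insert => [|o']; [apply: s_exp_relator | apply: x_exp_relator].
Qed.

End Invariants.

Definition zprod (I : Type) (g : I -> word) (a : I -> int) (s : seq I) : word :=
  flatten [seq zpow (g i) (a i) | i <- s].

Lemma zprod_cons (I : Type) (g : I -> word) a i s :
  zprod g a (i :: s) = zpow (g i) (a i) ++ zprod g a s.
Proof. by []. Qed.

Section ZProd.
Variables (n : nat) (I : Type) (g : I -> word).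
Implicit Types (a b : I -> int) (s : seq I) (w : word) (z : int).
Local Open Scope ring_scope.

Lemma s_exp_zpow w z : s_exp (zpow w z) = z * s_exp w.
Proof.
have s_exp_wpow v k : s_exp (wpow v k) = k%:Z * s_exp v.
  by elim: k => [|k IHk]; rewrite ?mul0r // wpowS s_exp_cat IHk; lia.
by case: z => k; rewrite /= s_exp_wpow // s_exp_winv; lia.
Qed.

Lemma x_exp_zpow j o w z :
  (n %| s_exp w)%Z -> x_exp n j o (zpow w z) = z * x_exp n j o w.
Proof.
have x_exp_wpow v k :
    (n %| s_exp v)%Z -> x_exp n j o (wpow v k) = k%:Z * x_exp n j o v.
  move=> n_sv; elim: k => [|k IHk]; rewrite ?mul0r // wpowS x_exp_cat.
  by rewrite x_exp_periodic // IHk; lia.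
move=> n_sw; case: z => k /=; first exact: x_exp_wpow.
rewrite x_exp_wpow ?s_exp_winv ?rpredN // x_exp_winv x_exp_periodic ?rpredN //; lia.
Qed.

Lemma s_exp_zprod a s : s_exp (zprod g a s) = \sum_(i <- s) a i * s_exp (g i).
Proof.
by elim: s => [|i s IHs]; rewrite ?big_nil ?big_cons // s_exp_cat s_exp_zpow IHs.
Qed.

Lemma x_exp_zprod j o a s : (forall i, n %| s_exp (g i))%Z ->
  x_exp n j o (zprod g a s) = \sum_(i <- s) a i * x_exp n j o (g i).
Proof.
move=> n_sg; elim: s => [|i s IHs]; rewrite ?big_nil ?big_cons //.
by rewrite x_exp_cat x_exp_zpow // x_exp_periodic ?IHs // s_exp_zpow dvdz_mull.
Qed.

Lemma wcommute_zprodr w a s : (forall i, wcommute n w (g i)) -> wcommute n w (zprod g a s).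
Proof.
move=> Cwg; elim: s => [|i s IHs]; first exact: wcommute0r.
by apply: wcommute_catr IHs; apply: wcommute_zpowr.
Qed.

Lemma zprodD a b s : (forall i k, wcommute n (g i) (g k)) ->
  gamma_eq n (zprod g (fun i => a i + b i) s) (zprod g a s ++ zprod g b s).
Proof.
move=> Cg; elim: s => [|i s IHs] /=; first exact: ge_refl.
apply: ge_trans (ge_cat (zpowD _ _ _ _) IHs) _.
rewrite -!catA; apply: ge_catl; rewrite !catA; apply: ge_catr.
by apply: wcommute_zprodr => k; apply/wcommuteC/wcommute_zpowr.
Qed.

End ZProd.

Section ZProdDelta.
Variables (I : eqType) (g : I -> word).
Local Open Scope ring_scope.

Lemma zprod_eq_nil a s : {in s, forall i, a i = 0} -> zprod g a s = [::].
Proof.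
elim: s => [//|k s IHs] a0; rewrite zprod_cons a0 ?mem_head //= IHs // => i i_s.
by rewrite a0 // inE i_s orbT.
Qed.

Lemma zprod_delta s i : uniq s -> i \in s -> zprod g (fun j => (j == i)%:R) s = g i.
Proof.
elim: s => [//|k s IHs] /= /andP [k_s s_uniq]; rewrite inE zprod_cons.
case: eqVneq => [-> _ | _ /= i_s]; last exact: IHs.
rewrite zprod_eq_nil => [|j j_s]; first by rewrite cats0 /= /wpow /= cats0.
by case: eqP j_s => // ->; rewrite (negbTE k_s).
Qed.

End ZProdDelta.

Definition sconj (i : nat) (w : word) : word := nseq i ls ++ w ++ nseq i lsi.
Definition xconj (i : nat) : word := sconj i [:: lx].

Lemma sconjE i w : sconj i w = nseq i ls ++ w ++ winv (nseq i ls).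
Proof. by rewrite winv_nseq. Qed.

Lemma sconjD i k w : sconj (i + k) w = sconj i (sconj k w).
Proof. by rewrite /sconj nseqD (addnC i k) nseqD !catA. Qed.

Section Embedding.
Variable n : nat.
Local Open Scope ring_scope.

Lemma wcommute_x_xconj k : (0 < k < n)%N -> wcommute n [:: lx] (xconj k).
Proof.
move=> k_lt; apply/wcommute_of_wcomm/ge_relator; rewrite inE; apply/predU1P; right.
by apply/mapP; exists k; rewrite ?mem_iota ?wpow1l //; lia.
Qed.

Lemma wcommute_xconj i j : (i < n)%N -> (j < n)%N -> wcommute n (xconj i) (xconj j).
Proof.
wlog le_ij : i j / (i <= j)%N.
  move=> IH i_lt j_lt; case: (leqP i j) => [le_ij | /ltnW le_ji]; first exact: IH.
  exact/wcommuteC/IH.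
move=> _ j_lt; rewrite /xconj -(subnKC le_ij) sconjD -/(xconj (j - i)) !sconjE.
apply: wcommute_conj; case: (posnP (j - i)) => [-> | ji_gt0]; first exact: ge_refl.
by apply: wcommute_x_xconj; lia.
Qed.

Lemma wcommute_nseq_xconj i : wcommute n (nseq n ls) (xconj i).
Proof.
have Cs : wcommute n (nseq n ls) (nseq i ls).
  by rewrite /wcommute -!nseqD addnC; apply: ge_refl.
rewrite /xconj sconjE; apply: wcommute_catr; last apply: wcommute_catr.
- exact: Cs.
- by apply/wcommute_of_wcomm/ge_relator; rewrite inE wpow1l eqxx.
- exact: wcommute_winvr.
Qed.

Lemma s_exp_xconj i : s_exp (xconj i) = 0.
Proof. by rewrite /xconj /sconj !s_exp_cat s_exp_nseq_ls s_exp_nseq_lsi /=; lia. Qed.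

Lemma x_exp_xconj i j : (i < n)%N -> (j < n)%N -> x_exp n j 0 (xconj i) = (i == j)%:R.
Proof.
move=> i_lt j_lt; rewrite /xconj /sconj !x_exp_cat !x_exp_nseq // s_exp_nseq_ls /=.
by rewrite add0r !addr0 !modz_nat !modn_small // eqz_nat add0n; case: eqP.
Qed.

Definition zgens : seq word := [:: xconj 0; xconj 1; xconj 2; nseq n ls].

Definition zgen (i : 'I_4) : word := nth [::] zgens i.

Definition zembed (a : Z4) : word := zprod zgen a (index_enum 'I_4).

Lemma zgenE i : zgen i = if (i < 3)%N then xconj i else nseq n ls.
Proof. by case: i => [[|[|[|[|]]]] ?]. Qed.

Lemma zgensP w : w \in zgens -> exists i, w = zgen i.
Proof.
move=> w_gens; have i_lt : (index w zgens < 4)%N by rewrite index_mem.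
by exists (Ordinal i_lt); rewrite /zgen nth_index.
Qed.

Lemma s_exp_zgen i : s_exp (zgen i) = (i == ord_max)%:R * n%:Z.
Proof.
rewrite zgenE; case: ifP => i3.
  by rewrite s_exp_xconj; case: eqP i3 => [-> //|]; rewrite mul0r.
have -> : i = ord_max by apply/val_inj; move: i3 (ltn_ord i) => /=; lia.
by rewrite s_exp_nseq_ls eqxx mul1r.
Qed.

Hypothesis n_gt2 : (2 < n)%N.

Lemma wcommute_zgen i j : wcommute n (zgen i) (zgen j).
Proof.
rewrite !zgenE; case: ifP => i3; case: ifP => j3.
- by apply: wcommute_xconj; lia.
- exact/wcommuteC/wcommute_nseq_xconj.
- exact: wcommute_nseq_xconj.
- exact: ge_refl.
Qed.

Lemma x_exp_zgen (i k : 'I_4) : (k < 3)%N -> x_exp n k 0 (zgen i) = (i == k)%:R.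
Proof.
move=> k3; rewrite zgenE; case: ifP => i3; first by rewrite x_exp_xconj //; lia.
by rewrite x_exp_nseq //; case: eqP => // ik; rewrite ik k3 in i3.
Qed.

Lemma zembed0 : zembed 0 = [::].
Proof. by apply: zprod_eq_nil => i _; rewrite ffunE. Qed.

Lemma zgen_zembed i : zgen i = zembed [ffun j => (j == i)%:R].
Proof.
rewrite -{1}(zprod_delta zgen (index_enum_uniq _) (mem_index_enum i)).
by congr flatten; apply: eq_map => j; rewrite ffunE.
Qed.

Lemma zembedD a b : gamma_eq n (zembed (a + b)) (zembed a ++ zembed b).
Proof.
have -> : zembed (a + b) = zprod zgen (fun i => a i + b i) (index_enum 'I_4).
  by rewrite /zembed /zprod; congr flatten; apply: eq_map => i; rewrite ffunE.
exact/zprodD/wcommute_zgen.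
Qed.

Lemma zembedN a : gamma_eq n (zembed (- a)) (winv (zembed a)).
Proof.
apply: ge_trans (ge_sym (ge_mulgK _ (zembed a) _)) _.
apply: ge_trans (ge_catr _ (ge_sym (zembedD _ _))) _.
by rewrite addNr zembed0; apply: ge_refl.
Qed.

Lemma s_exp_zembed a : s_exp (zembed a) = a ord_max * n%:Z.
Proof.
rewrite s_exp_zprod (big_only1 ord_max) // => [|i /negbTE i_max _].
  by rewrite s_exp_zgen eqxx mul1r.
by rewrite s_exp_zgen i_max mul0r mulr0.
Qed.

Lemma x_exp_zembed a (k : 'I_4) : (k < 3)%N -> x_exp n k 0 (zembed a) = a k.
Proof.
move=> k3; rewrite x_exp_zprod => [|i]; last by rewrite s_exp_zgen dvdz_mull.
rewrite (big_only1 k) // => [|i /negbTE ik _]; first by rewrite x_exp_zgen // eqxx mulr1.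
by rewrite x_exp_zgen // ik mulr0.
Qed.

Lemma zembed_inj a b : gamma_eq n (zembed a) (zembed b) -> a = b.
Proof.
move=> Eab; apply/ffunP => k; case: (ltnP k 3) => k3.
  by rewrite -!(x_exp_zembed _ k3); apply: ge_x_exp.
have k_max : k = ord_max by apply/val_inj; move: k3 (ltn_ord k) => /=; lia.
have := ge_s_exp Eab; rewrite !s_exp_zembed k_max => /mulIf; apply; lia.
Qed.

End Embedding.

Lemma gen_word_cat fs u v : gen_word fs u -> gen_word fs v -> gen_word fs (u ++ v).
Proof.
move=> gu gv; elim: gu => [|f w f_fs _ IHw|f w f_fs _ IHw] //=; rewrite -catA.
- exact: gw_pos.
- exact: gw_neg.
Qed.

Lemma gen_word1 fs f : f \in fs -> gen_word fs f.
Proof. by move=> f_fs; rewrite -[f]cats0; apply: gw_pos (gw_nil _). Qed.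

Lemma gen_word1V fs f : f \in fs -> gen_word fs (winv f).
Proof. by move=> f_fs; rewrite -[winv f]cats0; apply: gw_neg (gw_nil _). Qed.

Lemma gen_word_winv fs w : gen_word fs w -> gen_word fs (winv w).
Proof.
elim=> [|f w' f_fs _ IHw|f w' f_fs _ IHw]; first exact: gw_nil.
- by rewrite winv_cat; apply: gen_word_cat IHw (gen_word1V f_fs).
- by rewrite winv_cat winvK; apply: gen_word_cat IHw (gen_word1 f_fs).
Qed.

Section Subgroup.
Variables (n : nat) (fs : seq word).
Implicit Types (u v w : word).

Lemma in_subgroup_ge u v : in_subgroup n fs u -> gamma_eq n u v -> in_subgroup n fs v.
Proof. by case=> w [gw Euw] Euv; exists w; split => //; apply: ge_trans (ge_sym Euv) Euw. Qed.

Lemma in_subgroup_nil : in_subgroup n fs [::].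
Proof. by exists [::]; split; [apply: gw_nil | apply: ge_refl]. Qed.

Lemma in_subgroup_mem f : f \in fs -> in_subgroup n fs f.
Proof. by move=> f_fs; exists f; split; [apply: gen_word1 | apply: ge_refl]. Qed.

Lemma in_subgroup_cat u v :
  in_subgroup n fs u -> in_subgroup n fs v -> in_subgroup n fs (u ++ v).
Proof.
case=> w1 [gw1 E1] [w2 [gw2 E2]]; exists (w1 ++ w2).
by split; [apply: gen_word_cat | apply: ge_cat].
Qed.

Lemma in_subgroup_winv u : in_subgroup n fs u -> in_subgroup n fs (winv u).
Proof.
by case=> w [gw E]; exists (winv w); split; [apply: gen_word_winv | apply: ge_winv].
Qed.

Lemma in_subgroup_divr u v :
  in_subgroup n fs (u ++ v) -> in_subgroup n fs v -> in_subgroup n fs u.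
Proof.
move=> Huv Hv; apply: in_subgroup_ge (ge_mulgK _ v u).
exact: in_subgroup_cat Huv (in_subgroup_winv Hv).
Qed.

Lemma in_subgroup_zpow u z : in_subgroup n fs u -> in_subgroup n fs (zpow u z).
Proof.
have in_subgroup_wpow v k : in_subgroup n fs v -> in_subgroup n fs (wpow v k).
  by move=> Hv; elim: k => [|k IHk]; [apply: in_subgroup_nil | apply: in_subgroup_cat].
by move=> Hu; case: z => k; apply: in_subgroup_wpow => //; apply: in_subgroup_winv.
Qed.

Lemma in_subgroup_zprod (I : Type) (g : I -> word) a s :
  (forall i, in_subgroup n fs (g i)) -> in_subgroup n fs (zprod g a s).
Proof.
move=> Hg; elim: s => [|i s IHs]; first exact: in_subgroup_nil.
exact: in_subgroup_cat (in_subgroup_zpow _ (Hg i)) IHs.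
Qed.

End Subgroup.

Lemma in_subgroup_trans n fs gs w : {in fs, forall f, in_subgroup n gs f} ->
  in_subgroup n fs w -> in_subgroup n gs w.
Proof.
move=> Hfs [v [gv Ewv]]; apply: in_subgroup_ge (ge_sym Ewv).
elim: gv => [|f v' f_fs _ IHv|f v' f_fs _ IHv]; first exact: in_subgroup_nil.
- exact: in_subgroup_cat (Hfs f f_fs) IHv.
- exact: in_subgroup_cat (in_subgroup_winv (Hfs f f_fs)) IHv.
Qed.

Lemma subgroup_iso_Z4_eq_span n fs gs : subgroup_iso_Z4 n gs ->
  {in fs, forall f, in_subgroup n gs f} -> {in gs, forall g, in_subgroup n fs g} ->
  subgroup_iso_Z4 n fs.
Proof.
case=> phi [phiD [phi_inj phi_img]] fs_gs gs_fs; exists phi; do 2!split => //.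
by move=> w; rewrite -phi_img; split; apply: in_subgroup_trans.
Qed.

Section EmbeddingImage.
Variable n : nat.
Hypothesis n_gt2 : (2 < n)%N.
Local Open Scope ring_scope.

Lemma zembed_onto w : in_subgroup n (zgens n) w -> exists a, gamma_eq n w (zembed n a).
Proof.
case=> v [gv Ewv]; suff [a Eva] : exists a, gamma_eq n v (zembed n a).
  by exists a; apply: ge_trans Ewv Eva.
elim: gv => [|f v' /zgensP [i ->] _ [a Ea]|f v' /zgensP [i ->] _ [a Ea]].
- by exists 0; rewrite zembed0; apply: ge_refl.
- exists ([ffun j => (j == i)%:R] + a); rewrite zgen_zembed.
  exact: ge_trans (ge_catl _ Ea) (ge_sym (zembedD n_gt2 _ _)).
- exists (- [ffun j => (j == i)%:R] + a); rewrite zgen_zembed.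
  apply: ge_trans (ge_cat (ge_sym (zembedN n_gt2 _)) Ea) _.
  exact: ge_sym (zembedD n_gt2 _ _).
Qed.

Lemma subgroup_iso_Z4_zgens : subgroup_iso_Z4 n (zgens n).
Proof.
exists (zembed n); split; [|split] => [a b|a b|w].
- exact: zembedD.
- exact: zembed_inj.
split; first exact: zembed_onto.
case=> a Ewa; apply: in_subgroup_ge (ge_sym Ewa).
by apply: in_subgroup_zprod => i; apply/in_subgroup_mem/mem_nth.
Qed.

End EmbeddingImage.

Lemma in_subgroup_xconj n k : k < 3 -> in_subgroup n (zgens n) (xconj k).
Proof. by case: k => [|[|[|]]] // _; apply: in_subgroup_mem. Qed.

Lemma in_subgroup_nseq_ls n : in_subgroup n (zgens n) (nseq n ls).
Proof. by apply: in_subgroup_mem; rewrite !inE eqxx ?orbT. Qed.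

Definition positive_word (W : seq (letter * nat)) : word :=
  flatten [seq nseq p.2 p.1 | p <- W].

Lemma positive_rep_word n S W : W != [::] ->
  all (fun p => (p.1 \in S) && (0 < p.2)) W -> sorted (fun p q => p.1 != q.1) W ->
  positive_rep n S (positive_word W).
Proof.
move=> W0 W_S W_sorted; exists W; do !split => //.
by rewrite /positive_word; under eq_map => p do rewrite wpow1l; apply: ge_refl.
Qed.

Lemma positive_word1 l k : positive_word [:: (l, k)] = nseq k l.
Proof. exact: cats0. Qed.

Lemma ge_positive_word_sconj n i y : i <= n ->
  gamma_eq n (positive_word [:: (ls, i); (y, 1); (ls, n - i)]) (sconj i [:: y] ++ nseq n ls).
Proof.
move=> le_in; have -> : nseq n ls = nseq i ls ++ nseq (n - i) ls.
  by rewrite -nseqD subnKC.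
rewrite /positive_word /= cats0 sconjE -catA; apply: ge_catl; apply: (@ge_catl _ [:: y]).
exact: ge_sym (ge_mulKg _ _ _).
Qed.

Section PositiveWordSconj.
Variables (n : nat) (fs : seq word) (i : nat) (y : letter).
Hypotheses (le_in : i <= n) (nseq_fs : in_subgroup n fs (nseq n ls)).

Lemma in_subgroup_positive_word_sconj : in_subgroup n fs (sconj i [:: y]) ->
  in_subgroup n fs (positive_word [:: (ls, i); (y, 1); (ls, n - i)]).
Proof.
move=> y_fs; apply: in_subgroup_ge (ge_sym (ge_positive_word_sconj y le_in)).
exact: in_subgroup_cat.
Qed.

Lemma in_subgroup_sconj_positive_word :
  in_subgroup n fs (positive_word [:: (ls, i); (y, 1); (ls, n - i)]) ->
  in_subgroup n fs (sconj i [:: y]).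
Proof.
move=> w_fs; apply: in_subgroup_divr nseq_fs.
exact: in_subgroup_ge (ge_positive_word_sconj y le_in).
Qed.

End PositiveWordSconj.

Lemma subgroup_iso_Z4_fs n : 2 < n -> subgroup_iso_Z4 n
  [:: positive_word [:: (lx, 1)];
      positive_word [:: (ls, 1); (lx, 1); (ls, n - 1)];
      positive_word [:: (ls, 2); (lx, 1); (ls, n - 2)];
      positive_word [:: (ls, n)]].
Proof.
set fs := [:: _; _; _; _] => n_gt2.
have nseq_fs : in_subgroup n fs (nseq n ls).
  by rewrite -positive_word1; apply: in_subgroup_mem; rewrite !inE eqxx ?orbT.
apply: subgroup_iso_Z4_eq_span (subgroup_iso_Z4_zgens n_gt2) _ _ => w.
  rewrite !inE => /or4P [] /eqP ->.
  - exact: (in_subgroup_xconj n (k := 0)).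
  - apply: in_subgroup_positive_word_sconj (in_subgroup_nseq_ls n) _; first lia.
    exact: (in_subgroup_xconj n (k := 1)).
  - apply: in_subgroup_positive_word_sconj (in_subgroup_nseq_ls n) _; first lia.
    exact: (in_subgroup_xconj n (k := 2)).
  - by rewrite positive_word1; apply: in_subgroup_nseq_ls.
rewrite !inE => /or4P [] /eqP -> //; first exact: in_subgroup_mem.
- apply: in_subgroup_sconj_positive_word nseq_fs _; first lia.
  by apply: in_subgroup_mem; rewrite !inE eqxx ?orbT.
- apply: in_subgroup_sconj_positive_word nseq_fs _; first lia.
  by apply: in_subgroup_mem; rewrite !inE eqxx ?orbT.
Qed.

Lemma subgroup_iso_Z4_gs n : 2 < n -> subgroup_iso_Z4 n
  [:: positive_word [:: (ls, 1); (lx, 1); (ls, n - 1)];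
      positive_word [:: (lx, 1)];
      positive_word [:: (ls, 2); (lxi, 1); (ls, n - 2)];
      positive_word [:: (lxi, 1); (lsi, n)]].
Proof.
set gs := [:: _; _; _; _] => n_gt2.
have g4E : positive_word [:: (lxi, 1); (lsi, n)] = winv (nseq n ls ++ xconj 0).
  by rewrite /positive_word /= cats0 winv_cat winv_nseq.
have x_gs : in_subgroup n gs (xconj 0) by apply: in_subgroup_mem.
have nseq_gs : in_subgroup n gs (nseq n ls).
  apply: in_subgroup_divr x_gs; rewrite -[_ ++ _]winvK -g4E.
  by apply/in_subgroup_winv/in_subgroup_mem; rewrite !inE eqxx ?orbT.
have xconj2E : xconj 2 = winv (sconj 2 [:: lxi]) by [].
apply: subgroup_iso_Z4_eq_span (subgroup_iso_Z4_zgens n_gt2) _ _ => w.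
  rewrite !inE => /or4P [] /eqP ->.
  - apply: in_subgroup_positive_word_sconj (in_subgroup_nseq_ls n) _; first lia.
    exact: (in_subgroup_xconj n (k := 1)).
  - exact: (in_subgroup_xconj n (k := 0)).
  - apply: in_subgroup_positive_word_sconj (in_subgroup_nseq_ls n) _; first lia.
    rewrite -[sconj _ _]winvK -xconj2E; apply: in_subgroup_winv.
    exact: (in_subgroup_xconj n (k := 2)).
  - rewrite g4E; apply/in_subgroup_winv/in_subgroup_cat; first exact: in_subgroup_nseq_ls.
    exact: (in_subgroup_xconj n (k := 0)).
rewrite !inE => /or4P [] /eqP -> //.
- apply: in_subgroup_sconj_positive_word nseq_gs _; first lia.
  by apply: in_subgroup_mem; rewrite !inE eqxx.
- rewrite xconj2E; apply: in_subgroup_winv.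
  apply: in_subgroup_sconj_positive_word nseq_gs _; first lia.
  by apply: in_subgroup_mem; rewrite !inE eqxx ?orbT.
Qed.

Theorem proposition1p5 (n : nat) : (12 <= n)%N ->
  exists f1 f2 f3 f4 g1 g2 g3 g4 : word,
    subgroup_iso_Z4 n [:: f1; f2; f3; f4] /\
    subgroup_iso_Z4 n [:: g1; g2; g3; g4] /\
    (positive_rep n S1 f1 /\ positive_rep n S1 f2 /\
     positive_rep n S1 f3 /\ positive_rep n S1 f4) /\
    (positive_rep n S1 g1 /\ positive_rep n S2 g2 /\
     positive_rep n S3 g3 /\ positive_rep n S4 g4).
Proof.
move=> n_ge12; have n_gt2 : (2 < n)%N by lia.
exists (positive_word [:: (lx, 1%N)]), (positive_word [:: (ls, 1%N); (lx, 1%N); (ls, n - 1)]),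
  (positive_word [:: (ls, 2%N); (lx, 1%N); (ls, n - 2)]), (positive_word [:: (ls, n)]).
exists (positive_word [:: (ls, 1%N); (lx, 1%N); (ls, n - 1)]), (positive_word [:: (lx, 1%N)]),
  (positive_word [:: (ls, 2%N); (lxi, 1%N); (ls, n - 2)]),
  (positive_word [:: (lxi, 1%N); (lsi, n)]).
split; first exact: subgroup_iso_Z4_fs.
split; first exact: subgroup_iso_Z4_gs.
by split; do !split; apply: positive_rep_word => //=; rewrite ?andbT; lia.
Qed.
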